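(* Let $(X,Y)$ be a random pair with $X\in\mathbb{R}^d$ and $Y\in\{+1,-1\}$ with arbitrary joint distribution, and let $p_1(x)=\Pr(Y=+1\mid X=x)$. Let $\alpha\in[0,1)$ and let $\varphi$ be one of the losses $\varphi_{\mathrm{LR}},\varphi_{\mathrm{LS},\alpha},\varphi_{\mathrm{MLS},\alpha},\varphi_{\mathrm{LSQ}}$, with $\phi(v,y)=\varphi(yv)$. Let $\bar g\in\operatorname{argmin}_{g:\mathbb{R}^d\to\mathbb{R}}\mathbb{E}[\phi(g(X),Y)]$. Then $\frac{1}{1+e^{-\bar g(x)}}=p_1(x)$ for almost every $x$ (with respect to the distribution of $X$) when $\varphi\in\{\varphi_{\mathrm{LR}},\varphi_{\mathrm{MLS},\alpha},\varphi_{\mathrm{LSQ}}\}$, and $s_\alpha^{-1}\big(\frac{1}{1+e^{-\bar g(x)}}\big)=p_1(x)$ for almost every $x$ when $\varphi=\varphi_{\mathrm{LS},\alpha}$.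
   Context: The losses are: $\varphi_{\mathrm{LR}}(v)=-\ln\frac{1}{1+e^{-v}}$; $\varphi_{\mathrm{LS},\alpha}(v)=-(1-\frac{\alpha}{2})\ln\frac{1}{1+e^{-v}}-\frac{\alpha}{2}\ln\frac{1}{1+e^{v}}$; $\varphi_{\mathrm{MLS},\alpha}(v)=-(1-\frac{\alpha}{2})\ln\big(\frac{1-\alpha}{1+e^{-v}}+\frac{\alpha}{2}\big)-\frac{\alpha}{2}\ln\big(\frac{1-\alpha}{1+e^{v}}+\frac{\alpha}{2}\big)$; $\varphi_{\mathrm{LSQ}}(v)=\frac{1}{2(1+e^{v})^2}$. Here $s_\alpha(u)=(1-\alpha)u+\frac{\alpha}{2}$ and $s_\alpha^{-1}(u)=(u-\frac{\alpha}{2})/(1-\alpha)$. The minimization is over measurable functions $g$. *)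

From HB Require Import structures.
From mathcomp Require Import all_boot all_order all_algebra.
From mathcomp Require Import all_classical all_reals all_analysis.
Set Implicit Arguments. Unset Strict Implicit. Unset Printing Implicit Defensive.
Import Order.TTheory GRing.Theory Num.Theory.
Local Open Scope ring_scope.

Section Losses.
Variable R : realType.

Definition sigmoid (v : R) : R := 1 / (1 + expR (- v)).

Definition phi_LR (v : R) : R := - ln (1 / (1 + expR (- v))).

Definition phi_LS (alpha v : R) : R :=
  - (1 - alpha / 2) * ln (1 / (1 + expR (- v)))
  - alpha / 2 * ln (1 / (1 + expR v)).

Definition phi_MLS (alpha v : R) : R :=
  - (1 - alpha / 2) * ln ((1 - alpha) / (1 + expR (- v)) + alpha / 2)
  - alpha / 2 * ln ((1 - alpha) / (1 + expR v) + alpha / 2).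

Definition phi_LSQ (v : R) : R := 1 / (2 * (1 + expR v) ^+ 2).

Definition s_alpha (alpha u : R) : R := (1 - alpha) * u + alpha / 2.
Definition s_alpha_inv (alpha u : R) : R := (u - alpha / 2) / (1 - alpha).

End Losses.

Inductive loss_kind := LR | LS | MLS | LSQ.

Definition loss (R : realType) (alpha : R) (k : loss_kind) : R -> R :=
  match k with
  | LR => @phi_LR R
  | LS => phi_LS alpha
  | MLS => phi_MLS alpha
  | LSQ => @phi_LSQ R
  end.

Definition recovered (R : realType) (alpha : R) (k : loss_kind) (v : R) : R :=
  match k with
  | LS => s_alpha_inv alpha (sigmoid v)
  | _ => sigmoid v
  end.

From HB Require Import structures.
From mathcomp Require Import all_boot all_order all_algebra.
From mathcomp Require Import all_classical all_reals all_analysis.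
From mathcomp Require Import measurable_realfun ring lra.
Import Order.TTheory GRing.Theory Num.Theory.
Local Open Scope classical_set_scope.
Local Open Scope ring_scope.

(* Write u = sigmoid (g x).  Conditioning on X, the expected loss of g is the
   integral, against the law of X, of the conditional risk
   p1(x) L(u) + (1 - p1(x)) L(1 - u), where L is the loss seen as a function of
   the predicted probability u.  For LR, LS and MLS this conditional risk is a
   cross-entropy, for LSQ a parabola, and in each case moving u halfway towards
   p1(x) (towards s_alpha(p1(x)) for LS) lowers it, strictly unless u is already
   there.  The halfway point is again of the form sigmoid (g' x) with g'
   measurable.  For a minimiser gbar, the conditional risk of gbar dominates
   that of g' pointwise but has no larger (and finite) integral, so the two
   agree almost everywhere, which forces u = p1(x) (resp. s_alpha(p1(x)))
   almost everywhere. *)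

Set Implicit Arguments.
Unset Strict Implicit.
Unset Printing Implicit Defensive.

Section sigmoid.
Variable R : realType.
Implicit Types (u v : R).

Lemma onepexpR_gt0 v : 0 < 1 + expR v :> R.
Proof. by rewrite addr_gt0 ?expR_gt0. Qed.

Lemma sigmoid_gt0 v : 0 < sigmoid v.
Proof. by rewrite /sigmoid divr_gt0 ?onepexpR_gt0. Qed.

Lemma sigmoid_lt1 v : sigmoid v < 1.
Proof. by rewrite /sigmoid ltr_pdivrMr ?onepexpR_gt0// mul1r ltrDl expR_gt0. Qed.

Lemma sigmoid0 : sigmoid 0 = 2^-1 :> R.
Proof. by rewrite /sigmoid oppr0 expR0 div1r. Qed.

Lemma onem_sigmoid v : 1 - sigmoid v = 1 / (1 + expR v).
Proof.
have e0 : expR v != 0 by rewrite gt_eqF ?expR_gt0.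
have e1 : 1 + expR v != 0 by rewrite gt_eqF ?onepexpR_gt0.
by rewrite /sigmoid expRN; field; rewrite e1 e0.
Qed.

Lemma sigmoidN v : sigmoid (- v) = 1 - sigmoid v.
Proof. by rewrite onem_sigmoid /sigmoid opprK. Qed.

Lemma sigmoid_nd : {homo @sigmoid R : u v / u <= v}.
Proof.
move=> u v uv; rewrite /sigmoid !div1r lef_pV2 ?posrE ?onepexpR_gt0//.
by rewrite lerD2l ler_expR lerN2.
Qed.

Lemma measurable_sigmoid : measurable_fun [set: R] (@sigmoid R).
Proof. exact: nondecreasing_measurable measurableT sigmoid_nd. Qed.

Definition logit u : R := ln u - ln (1 - u).

Lemma logitK u : 0 < u < 1 -> sigmoid (logit u) = u.
Proof.
move=> /andP[u0 u1].
have u1' : 0 < 1 - u by rewrite subr_gt0.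
rewrite /sigmoid /logit opprB expRD expRN !lnK ?posrE//.
have e0 : u != 0 by rewrite gt_eqF.
have e1 : 1 - u != 0 by rewrite gt_eqF.
by field; rewrite e0 addrC subrK oner_neq0.
Qed.

Lemma measurable_logit : measurable_fun [set: R] logit.
Proof.
apply: measurable_funB; first exact: measurable_ln.
by apply: measurableT_comp; [exact: measurable_ln | exact: measurable_funB].
Qed.

End sigmoid.

Section cross_entropy.
Variable R : realType.
Implicit Types q w x y : R.

Definition cross_entropy q w : R := - q * ln w - (1 - q) * ln (1 - w).

Lemma ln_div_le x y : 0 < x -> 0 < y -> ln x - ln y <= x / y - 1.
Proof.
move=> x0 y0; rewrite -ln_div ?posrE//.
have xy0 : 0 < x / y by rewrite divr_gt0.
have := @le_ln1Dx R (x / y - 1); rewrite addrCA subrr addr0; apply; lra.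
Qed.

Lemma cross_entropy_midpoint q w : 0 <= q <= 1 -> 0 < w < 1 ->
  cross_entropy q ((w + q) / 2) <= cross_entropy q w /\
  (w != q -> cross_entropy q ((w + q) / 2) < cross_entropy q w).
Proof.
move=> /andP[q0 q1] /andP[w0 w1]; set m := (w + q) / 2.
have m0 : 0 < m by rewrite /m; lra.
have m1 : 0 < 1 - m by rewrite /m; lra.
have w1' : 0 < 1 - w by lra.
(* Bounding [ln w - ln m] and [ln (1 - w) - ln (1 - m)] by [ln z <= z - 1]
   leaves exactly a multiple of [- (w - q)^2]. *)
have gapE : q * (w / m - 1) + (1 - q) * ((1 - w) / (1 - m) - 1) =
    - ((w - q) ^+ 2 / (4 * m * (1 - m))).
  by rewrite /m; field; apply/andP; split; apply/eqP; lra.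
have lnw := ler_wpM2l q0 (ln_div_le w0 m0).
have q1' : 0 <= 1 - q by rewrite subr_ge0.
have lnw1 := ler_wpM2l q1' (ln_div_le w1' m1).
have den0 : 0 < 4 * m * (1 - m) by apply: mulr_gt0 => //; apply: mulr_gt0.
rewrite /cross_entropy; split.
  have : 0 <= (w - q) ^+ 2 / (4 * m * (1 - m)) by rewrite divr_ge0 ?sqr_ge0 ?ltW.
  lra.
move=> wq.
have : 0 < (w - q) ^+ 2 / (4 * m * (1 - m)).
  by rewrite divr_gt0// lt_def sqr_ge0 andbT sqrf_eq0 subr_eq0.
lra.
Qed.

End cross_entropy.

Section losses.
Variables (R : realType) (a : R).
Implicit Types (p u v : R) (k : loss_kind).

Definition prob_loss k u : R :=
  match k with
  | LR => - ln u
  | LS => - (1 - a / 2) * ln u - a / 2 * ln (1 - u)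
  | MLS => - (1 - a / 2) * ln (s_alpha a u) - a / 2 * ln (s_alpha a (1 - u))
  | LSQ => (1 - u) ^+ 2 / 2
  end.

Lemma loss_sigmoid k v : loss a k v = prob_loss k (sigmoid v).
Proof.
have e : 1 + expR v != 0 by rewrite gt_eqF ?onepexpR_gt0.
case: k => /=.
- by rewrite /phi_LR.
- by rewrite /phi_LS onem_sigmoid.
- by rewrite /phi_MLS /s_alpha onem_sigmoid /sigmoid !div1r.
- by rewrite /phi_LSQ onem_sigmoid; field; rewrite addrC.
Qed.

Lemma measurable_prob_loss k : measurable_fun [set: R] (prob_loss k).
Proof.
have ml := @measurable_ln R.
have mlnB : measurable_fun [set: R] (fun u => ln (1 - u)).
  by apply: measurableT_comp => //; exact: measurable_funB.
have ms : measurable_fun [set: R] (s_alpha a).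
  by apply: measurable_funD => //; exact: measurable_funM.
case: k => /=.
- exact: measurable_funN.
- by apply: measurable_funB; apply: measurable_funM.
- apply: measurable_funB; apply: measurable_funM => //; apply: measurableT_comp => //.
  exact: measurableT_comp ms (measurable_funB _ _).
- by apply: measurable_funM => //; apply: measurable_funX; exact: measurable_funB.
Qed.

Lemma measurable_loss k : measurable_fun [set: R] (loss a k).
Proof.
rewrite (_ : loss a k = prob_loss k \o @sigmoid R).
  exact: measurableT_comp (measurable_prob_loss k) (@measurable_sigmoid R).
by apply/funext => v; rewrite /= loss_sigmoid.
Qed.

(* [cond_risk k p (sigmoid v)] is the expected loss of the score v when
   P(Y = 1) = p. *)
Definition cond_risk k p u : R :=
  p * prob_loss k u + (1 - p) * prob_loss k (1 - u).

Lemma cond_risk_half k p : cond_risk k p 2^-1 = prob_loss k 2^-1.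
Proof. by rewrite /cond_risk (_ : 1 - 2^-1 = 2^-1 :> R); [ring | field]. Qed.

Lemma measurable_cond_risk dT (T : measurableType dT) k (f g : T -> R) :
  measurable_fun [set: T] f -> measurable_fun [set: T] g ->
  measurable_fun [set: T] (fun x => cond_risk k (f x) (g x)).
Proof.
move=> mf mg; have mL := measurable_prob_loss k.
apply: measurable_funD; apply: measurable_funM.
- exact: mf.
- exact: measurableT_comp mL mg.
- exact: measurable_funB.
- by apply: measurableT_comp mL _; exact: measurable_funB.
Qed.

Definition optimal_prob k p : R := if k is LS then s_alpha a p else p.

Lemma measurable_optimal_prob k : measurable_fun [set: R] (optimal_prob k).
Proof.
case: k; rewrite /optimal_prob /s_alpha /=; try exact: measurable_id.
by apply: measurable_funD => //; exact: measurable_funM.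
Qed.

Lemma cond_risk_LR p u : cond_risk LR p u = cross_entropy p u.
Proof. by rewrite /cond_risk /cross_entropy /=; ring. Qed.

Lemma cond_risk_LS p u : cond_risk LS p u = cross_entropy (s_alpha a p) u.
Proof. by rewrite /cond_risk /cross_entropy /s_alpha /= subKr; field. Qed.

Lemma cond_risk_MLS p u :
  cond_risk MLS p u = cross_entropy (s_alpha a p) (s_alpha a u).
Proof.
have sN x : s_alpha a (1 - x) = 1 - s_alpha a x by rewrite /s_alpha; field.
by rewrite /cond_risk /cross_entropy /= !sN subKr /s_alpha; field.
Qed.

Lemma cond_risk_LSQ p u : cond_risk LSQ p u = (u - p) ^+ 2 / 2 + p * (1 - p) / 2.
Proof. by rewrite /cond_risk /=; field. Qed.

Hypothesis a01 : 0 <= a < 1.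

Let onem_a_neq0 : 1 - a != 0.
Proof. by case/andP: a01 => _ a1; rewrite subr_eq0 gt_eqF. Qed.

Lemma s_alpha_inj : injective (s_alpha a).
Proof. by move=> u v /addIr /(mulfI onem_a_neq0). Qed.

Lemma s_alpha_01 u : 0 <= u <= 1 -> 0 <= s_alpha a u <= 1.
Proof. by case/andP: a01 => a0 a1 /andP[u0 u1]; rewrite /s_alpha; apply/andP; split; nra. Qed.

Lemma prob_loss_ge0 k u : 0 < u < 1 -> 0 <= prob_loss k u.
Proof.
case/andP: a01 => a0 a1 /andP[u0 u1].
have lnu : ln u <= 0 by rewrite ln_le0// ltW.
have lnu1 : ln (1 - u) <= 0 by rewrite ln_le0// gerBl ltW.
have lnsu v : 0 < v < 1 -> ln (s_alpha a v) <= 0.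
  by move=> /andP[v0 v1]; rewrite ln_le0// /s_alpha; nra.
have mix x y : x <= 0 -> y <= 0 -> 0 <= - (1 - a / 2) * x - a / 2 * y by nra.
case: k => /=.
- by rewrite oppr_ge0.
- exact: mix.
- by apply: mix; apply: lnsu; apply/andP; split; lra.
- by rewrite divr_ge0// sqr_ge0.
Qed.

Lemma cond_risk_ge0 k p u : 0 <= p <= 1 -> 0 < u < 1 -> 0 <= cond_risk k p u.
Proof.
move=> /andP[p0 p1] /andP[u0 u1].
have u1' : 0 < 1 - u < 1 by apply/andP; split; lra.
by rewrite addr_ge0// mulr_ge0 ?subr_ge0// prob_loss_ge0// u0.
Qed.

Lemma cond_risk_midpoint k p u : 0 <= p <= 1 -> 0 < u < 1 ->
  let m := (u + optimal_prob k p) / 2 in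
  [/\ 0 < m < 1, cond_risk k p m <= cond_risk k p u &
      u != optimal_prob k p -> cond_risk k p m < cond_risk k p u].
Proof.
move=> p01 u01 m; have /andP[u0 u1] := u01.
have [t0 t1] : 0 <= optimal_prob k p /\ optimal_prob k p <= 1.
  by apply/andP; case: k {m} => //; exact: s_alpha_01.
have m01 : 0 < m < 1 by rewrite /m; apply/andP; split; lra.
suff : cond_risk k p m <= cond_risk k p u /\
  (u != optimal_prob k p -> cond_risk k p m < cond_risk k p u) by case.
rewrite /m; case: k {m m01 t0 t1} => /=.
- by rewrite !cond_risk_LR; exact: cross_entropy_midpoint.
- by rewrite !cond_risk_LS; apply: cross_entropy_midpoint => //; exact: s_alpha_01.
- have su : 0 < s_alpha a u < 1.
    by case/andP: a01 => a0 a1; rewrite /s_alpha; apply/andP; split; nra.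
  have [le lt] := cross_entropy_midpoint (s_alpha_01 p01) su.
  have sm : s_alpha a ((u + p) / 2) = (s_alpha a u + s_alpha a p) / 2.
    by rewrite /s_alpha; field.
  rewrite !cond_risk_MLS sm; split => // up; apply: lt.
  by apply: contra up => /eqP/s_alpha_inj ->.
- have sq : ((u + p) / 2 - p) ^+ 2 = (u - p) ^+ 2 / 4 by field.
  rewrite !cond_risk_LSQ sq; split=> [|up].
    by have := sqr_ge0 (u - p); lra.
  have : 0 < (u - p) ^+ 2 by rewrite lt_def sqr_ge0 andbT sqrf_eq0 subr_eq0.
  lra.
Qed.

Lemma recovered_optimal_prob k v p :
  sigmoid v = optimal_prob k p -> recovered a k v = p.
Proof.
by case: k => //= ->; rewrite /s_alpha_inv /s_alpha; field.
Qed.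

End losses.

Section integral_preimage_density.
Local Open Scope ereal_scope.
Context dO dT (Omega : measurableType dO) (T : measurableType dT) (R : realType).
Variables (P : {measure set Omega -> \bar R}) (mu : {measure set T -> \bar R}).
Variables (X : Omega -> T) (E : set Omega) (g : T -> R).
Hypotheses (mX : measurable_fun [set: Omega] X) (mE : measurable E).
Hypotheses (mg : measurable_fun [set: T] g) (g0 : forall x, (0 <= g x)%R).
Hypothesis PXE : forall A, measurable A ->
  P (X @^-1` A `&` E) = \int[mu]_(x in A) (g x)%:E.

Let mXpre A : measurable A -> measurable (X @^-1` A).
Proof. by move=> mA; rewrite -[X @^-1` A]setTI; exact: mX. Qed.

Lemma integral_preimage_density_indic (B : set T) : measurable B ->
  \int[P]_(w in E) (\1_B (X w))%:E = \int[mu]_x ((\1_B x)%:E * (g x)%:E).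
Proof.
move=> mB; rewrite (@integral_indic _ _ _ P _ mE (X @^-1` B) (mXpre mB)).
rewrite PXE// integral_mkcond; apply: eq_integral => x _.
by rewrite epatch_indic /= muleC.
Qed.

Import HBNNSimple.

Lemma integral_preimage_density_nnsfun (h : {nnsfun T >-> R}) :
  \int[P]_(w in E) (h (X w))%:E = \int[mu]_x ((h x)%:E * (g x)%:E).
Proof.
have mh r : measurable (h @^-1` [set r]).
  by rewrite -[_ @^-1` _]setTI; exact: measurable_funP.
have mhX r : measurable_fun [set: Omega] (fun w => \1_(h @^-1` [set r]) (X w) : R).
  exact: measurableT_comp (measurable_indic (mh r)) mX.
transitivity (\sum_(r \in range h)
    \int[mu]_x ((r * \1_(h @^-1` [set r]) x)%:E * (g x)%:E)); last first.
  rewrite -ge0_integral_fsum//; last 2 first.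
  - move=> r; apply: emeasurable_funM; apply/measurable_EFinP => //.
    exact/measurable_funM/measurable_indic.
  - move=> r x _; apply: mule_ge0; last by rewrite lee_fin.
    by rewrite EFinM nnfun_muleindic_ge0.
  apply: eq_integral => x _; rewrite -ge0_mule_fsuml; last first.
    by move=> r; rewrite EFinM nnfun_muleindic_ge0.
  by rewrite fsumEFin// -fimfunE.
under eq_integral do rewrite fimfunE -fsumEFin//.
rewrite ge0_integral_fsum//; last 2 first.
- by move=> r; apply/measurable_EFinP/measurable_funTS/measurable_funM.
- by move=> r w _; rewrite EFinM nnfun_muleindic_ge0.
apply: eq_fsbigr => r /[1!inE] -[x _ <-].
under eq_integral do rewrite EFinM.
under [RHS]eq_integral do rewrite EFinM -muleA.
have hx0 : 0 <= (h x)%:E by rewrite lee_fin.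
rewrite ge0_integralZl//; last by apply/measurable_EFinP/measurable_funTS; exact: mhX.
rewrite ge0_integralZl//; last 2 first.
- by apply: emeasurable_funM; apply/measurable_EFinP => //; exact: measurable_indic.
- by move=> y _; rewrite mule_ge0 ?lee_fin.
by rewrite integral_preimage_density_indic.
Qed.

Lemma ge0_integral_preimage_density (f : T -> \bar R) :
  measurable_fun [set: T] f -> (forall x, 0 <= f x) ->
  \int[P]_(w in E) f (X w) = \int[mu]_x (f x * (g x)%:E).
Proof.
move=> mf f0; pose h := nnsfun_approx measurableT mf.
have hf x : (EFin \o h n) x @[n --> \oo] --> f x.
  exact: cvg_nnsfun_approx (fun y _ => f0 y) _ _.
have h_nd x : {homo (fun n => (h n x)%:E) : m n / (m <= n)%N >-> m <= n}.
  by move=> m n mn; rewrite lee_fin; exact/lefP/nd_nnsfun_approx.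
have -> : \int[P]_(w in E) f (X w) = limn (fun n => \int[P]_(w in E) (h n (X w))%:E).
  rewrite -monotone_convergence//; last 2 first.
  - by move=> n; apply/measurable_EFinP/measurable_funTS/measurableT_comp.
  - by move=> n w _; rewrite lee_fin.
  by apply: eq_integral => w _; apply/esym/cvg_lim => //; exact: hf.
have -> : \int[mu]_x (f x * (g x)%:E) = limn (fun n => \int[mu]_x ((h n x)%:E * (g x)%:E)).
  rewrite -monotone_convergence//; last 3 first.
  - by move=> n; apply: emeasurable_funM; exact/measurable_EFinP.
  - by move=> n x _; rewrite mule_ge0 ?lee_fin.
  - by move=> x _ m n mn; rewrite lee_wpmul2r ?lee_fin//; exact: h_nd.
  by apply: eq_integral => x _; apply/esym/cvg_lim => //; apply: cvgeZr => //; exact: hf.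
by under eq_fun do rewrite integral_preimage_density_nnsfun.
Qed.

End integral_preimage_density.

Section ae_of_set_integrals.
Local Open Scope ereal_scope.
Context d (T : measurableType d) (R : realType).
Variable mu : {measure set T -> \bar R}.

Lemma ae_notin_of_integral_le0 (N : set T) (h : T -> R) : measurable N ->
  measurable_fun N h -> (forall x, N x -> (0 < h x)%R) ->
  \int[mu]_(x in N) (h x)%:E <= 0 -> {ae mu, forall x, ~ N x}.
Proof.
move=> mN mh h_gt0 le0.
have abs0 : \int[mu]_(x in N) `|(h x)%:E| = 0.
  rewrite (eq_integral (fun x => (h x)%:E)); last first.
    by move=> x /[1!inE] Nx; rewrite gee0_abs// lee_fin ltW// h_gt0.
  apply/eqP; rewrite eq_le le0 integral_ge0// => x Nx.
  by rewrite lee_fin ltW// h_gt0.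
have mhE : measurable_fun N (EFin \o h) by exact/measurable_EFinP.
have /(ae_eq_integral_abs mu mN mhE).1 := abs0.
apply: filterS => x h0 Nx; have [/eqP] := h0 Nx.
by rewrite gt_eqF ?h_gt0.
Qed.

Lemma ae_eq_of_integral_le (u v : T -> R) :
  measurable_fun [set: T] u -> measurable_fun [set: T] v ->
  (forall x, 0 <= u x <= v x)%R -> \int[mu]_x (u x)%:E \is a fin_num ->
  \int[mu]_x (v x)%:E <= \int[mu]_x (u x)%:E -> {ae mu, forall x, v x = u x}.
Proof.
move=> mu' mv uv ufin vu.
have mvu : measurable_fun [set: T] (fun x => v x - u x)%R by exact: measurable_funB.
set N := (fun x => v x - u x)%R @^-1` `]0%R, +oo[.
have mN : measurable N.
  by rewrite -[N]setTI; apply: mvu => //; exact: measurable_itv.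
have u0 x : (0 <= u x)%R by case/andP: (uv x).
have vu0 x : 0 <= (v x - u x)%:E by rewrite lee_fin subr_ge0; case/andP: (uv x).
have : {ae mu, forall x, ~ N x}.
  apply: (@ae_notin_of_integral_le0 _ (fun x => v x - u x)%R mN).
  - exact: measurable_funTS.
  - by move=> x; rewrite /N /= in_itv /= andbT.
  have mvuE : measurable_fun [set: T] (fun x => (v x - u x)%:E).
    exact/measurable_EFinP.
  apply: (@le_trans _ _ (\int[mu]_x (v x - u x)%:E)).
    exact: ge0_subset_integral.
  rewrite -(leeD2rE _ _ ufin) add0e -ge0_integralD//; last 2 first.
  - by move=> x _; rewrite lee_fin.
  - exact/measurable_EFinP.
  by under eq_integral do rewrite -EFinD subrK.
apply: filterS => x /negP; rewrite /N /= in_itv /= andbT -leNgt subr_le0 => vux.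
by apply/eqP; rewrite eq_le vux; case/andP: (uv x).
Qed.

Variables (f : T -> R) (mf : measurable_fun [set: T] f).

Let mpre (B : set R) : measurable B -> measurable (f @^-1` B).
Proof. by move=> mB; rewrite -[f @^-1` B]setTI; exact: mf. Qed.

Lemma ae_ge0_of_integral_ge0 :
  (forall A, measurable A -> 0 <= \int[mu]_(x in A) (f x)%:E) ->
  {ae mu, forall x, (0 <= f x)%R}.
Proof.
move=> f_ge0; set N := f @^-1` `]-oo, 0%R[.
have mN : measurable N := mpre (measurable_itv _).
have : {ae mu, forall x, ~ N x}.
  apply: (@ae_notin_of_integral_le0 _ (fun x => - f x)%R mN).
  - exact/measurable_funTS/measurable_funN.
  - by move=> x; rewrite /N /= in_itv /= oppr_gt0.
  rewrite -oppe_ge0 -integral_ge0N.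
  - under eq_integral do rewrite EFinN oppeK; exact: f_ge0.
  - by move=> x; rewrite /N /= in_itv /= lee_fin oppr_ge0 => /ltW.
by apply: filterS => x; rewrite /N /= in_itv /= leNgt => /negP.
Qed.

Lemma ae_le1_of_integral_le_measure : (forall A, measurable A -> mu A < +oo) ->
  (forall A, measurable A -> \int[mu]_(x in A) (f x)%:E <= mu A) ->
  {ae mu, forall x, (f x <= 1)%R}.
Proof.
move=> mu_fin f_le; set N := f @^-1` `]1%R, +oo[.
have mN : measurable N := mpre (measurable_itv _).
have f1_ge0 x : N x -> 0 <= (f x - 1)%:E.
  by rewrite /N /= in_itv /= andbT lee_fin subr_ge0 => /ltW.
have : {ae mu, forall x, ~ N x}.
  apply: (@ae_notin_of_integral_le0 _ (fun x => f x - 1)%R mN).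
  - exact/measurable_funTS/measurable_funB.
  - by move=> x; rewrite /N /= in_itv /= andbT subr_gt0.
  have muN : mu N \is a fin_num by rewrite ge0_fin_numE ?mu_fin.
  rewrite -(leeD2rE _ _ muN) add0e -[X in _ + X]mul1e -integral_cst//.
  rewrite -ge0_integralD//; last exact/measurable_EFinP/measurable_funTS/measurable_funB.
  by under eq_integral do rewrite /= -EFinD subrK; exact: f_le.
by apply: filterS => x; rewrite /N /= in_itv /= andbT leNgt => /negP.
Qed.

End ae_of_set_integrals.

Section expected_loss.
Context (R : realType) dO (Omega : measurableType dO) (P : probability Omega R).
Context dT (T : measurableType dT) (X : {mfun Omega >-> T}).
Variables (Y : Omega -> R) (q : T -> R).
Hypotheses (mY : measurable_fun [set: Omega] Y) (Ypm : forall w, Y w = 1 \/ Y w = -1).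
Hypotheses (mq : measurable_fun [set: T] q) (q01 : forall x, 0 <= q x <= 1).
Hypothesis Pq : forall A, measurable A ->
  P (X @^-1` A `&` Y @^-1` [set 1]) = (\int[distribution P X]_(x in A) (q x)%:E)%E.

Local Notation PX := (distribution P X).

Let mX : measurable_fun [set: Omega] X := measurable_funPT X.

Let mXpre A : measurable A -> measurable (X @^-1` A).
Proof. by move=> mA; rewrite -[X @^-1` A]setTI; exact: mX. Qed.

Let mYpre r : measurable (Y @^-1` [set r]).
Proof. by rewrite -[Y @^-1` _]setTI; exact: mY. Qed.

Let YpmU : Y @^-1` [set 1] `|` Y @^-1` [set -1] = [set: Omega].
Proof. by apply/seteqP; split => // w _; case: (Ypm w) => Yw; [left | right]. Qed.

Let YpmI : Y @^-1` [set 1] `&` Y @^-1` [set -1] = set0.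
Proof. by apply/seteqP; split => // w [/= ->]; lra. Qed.

Lemma measure_preimage_Yneg A : measurable A ->
  P (X @^-1` A `&` Y @^-1` [set -1]) = (\int[PX]_(x in A) (1 - q x)%:E)%E.
Proof.
move=> mA; have mXA := mXpre mA.
have q0 x : 0 <= q x by case/andP: (q01 x).
have q1 x : 0 <= 1 - q x by rewrite subr_ge0; case/andP: (q01 x).
have PXA : PX A = (P (X @^-1` A `&` Y @^-1` [set 1%R]) +
                   P (X @^-1` A `&` Y @^-1` [set (-1)%R]))%E.
  rewrite -measureU; last 3 first.
  - exact: measurableI.
  - exact: measurableI.
  - by rewrite setICA !setIA setIid -setIA YpmI !setI0.
  by rewrite -setIUr YpmU setIT.
have PXAE : PX A = (\int[PX]_(x in A) (q x)%:E + \int[PX]_(x in A) (1 - q x)%:E)%E.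
  rewrite -ge0_integralD//; last 4 first.
  - by move=> x _; rewrite lee_fin.
  - exact/measurable_EFinP/measurable_funTS.
  - by move=> x _; rewrite lee_fin.
  - exact/measurable_EFinP/measurable_funTS/measurable_funB.
  rewrite -[LHS]mul1e -integral_cst//.
  by apply: eq_integral => x _; rewrite -EFinD subrKC.
have Pfin : (P (X @^-1` A `&` Y @^-1` [set 1%R]) \is a fin_num)%E.
  rewrite ge0_fin_numE// (le_lt_trans (probability_le1 _ _)) ?ltry//.
  exact: measurableI.
move: PXA; rewrite PXAE -Pq//; set c := P _ => /(congr1 (fun z => z - c)%E).
by rewrite ![(c + _)%E]addeC !addeK.
Qed.

Variables (a : R) (k : loss_kind).
Hypothesis a01 : 0 <= a < 1.

Lemma expected_loss_cond_risk (g : T -> R) : measurable_fun [set: T] g ->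
  (\int[P]_w (loss a k (Y w * g (X w)))%:E =
   \int[PX]_x (cond_risk a k (q x) (sigmoid (g x)))%:E)%E.
Proof.
move=> mg; have ml := measurable_loss a k.
have loss0 v : 0 <= loss a k v.
  by rewrite loss_sigmoid prob_loss_ge0// sigmoid_gt0 sigmoid_lt1.
have q0 x : 0 <= q x by case/andP: (q01 x).
have q1 x : 0 <= 1 - q x by rewrite subr_ge0; case/andP: (q01 x).
rewrite -YpmU ge0_integral_setU//; last 3 first.
- rewrite YpmU; apply/measurable_EFinP; apply: measurableT_comp ml _.
  by apply: measurable_funM => //; exact: measurableT_comp mg mX.
- by move=> w _; rewrite lee_fin loss0.
- by rewrite disj_set2E YpmI.
rewrite (eq_integral (fun w => (loss a k (g (X w)))%:E)); last first.
  by move=> w /[1!inE] /= ->; rewrite mul1r.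
rewrite [X in (_ + X)%E](eq_integral (fun w => (loss a k (- g (X w)))%:E)); last first.
  by move=> w /[1!inE] /= ->; rewrite mulN1r.
have mlg : measurable_fun [set: T] (fun x => (loss a k (g x))%:E).
  exact/measurable_EFinP/(measurableT_comp ml).
have mlNg : measurable_fun [set: T] (fun x => (loss a k (- g x))%:E).
  by apply/measurable_EFinP/(measurableT_comp ml); exact: measurable_funN.
have mq1 : measurable_fun [set: T] (fun x => 1 - q x) by exact: measurable_funB.
rewrite (ge0_integral_preimage_density mX (mYpre 1) mq q0 Pq mlg);
  last by move=> x; rewrite lee_fin loss0.
rewrite (ge0_integral_preimage_density mX (mYpre (-1)) mq1 q1 measure_preimage_Yneg mlNg);
  last by move=> x; rewrite lee_fin loss0.
rewrite -ge0_integralD//; last 4 first.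
- by move=> x _; rewrite mule_ge0 ?lee_fin ?loss0.
- by apply: emeasurable_funM => //; exact/measurable_EFinP.
- by move=> x _; rewrite mule_ge0 ?lee_fin ?loss0.
- by apply: emeasurable_funM => //; exact/measurable_EFinP.
apply: eq_integral => x _; rewrite -!EFinM -EFinD !loss_sigmoid sigmoidN /cond_risk.
by congr EFin; ring.
Qed.

Lemma risk_minimizer_optimal_prob (gbar : T -> R) :
  measurable_fun [set: T] gbar ->
  (forall g : T -> R, measurable_fun [set: T] g ->
     (\int[P]_w (loss a k (Y w * gbar (X w)))%:E <=
      \int[P]_w (loss a k (Y w * g (X w)))%:E)%E) ->
  {ae PX, forall x, sigmoid (gbar x) = optimal_prob a k (q x)}.
Proof.
move=> mgbar gbar_min.
pose u x := sigmoid (gbar x).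
pose m x := (u x + optimal_prob a k (q x)) / 2.
pose r x := cond_risk a k (q x) (u x).
pose r' x := cond_risk a k (q x) (m x).
have u01 x : 0 < u x < 1 by rewrite sigmoid_gt0 sigmoid_lt1.
have mid x := cond_risk_midpoint a01 k (q01 x) (u01 x).
have mu : measurable_fun [set: T] u := measurableT_comp (@measurable_sigmoid R) mgbar.
have mm : measurable_fun [set: T] m.
  apply: measurable_funM => //; apply: measurable_funD => //.
  exact: measurableT_comp (measurable_optimal_prob a k) mq.
have mr : measurable_fun [set: T] r by exact: measurable_cond_risk.
have mr' : measurable_fun [set: T] r' by exact: measurable_cond_risk.
have rr' x : 0 <= r' x <= r x.
  by have [m01 le _] := mid x; rewrite le andbT cond_risk_ge0.
(* [m x] lies in (0, 1), hence equals [sigmoid (logit (m x))]. *)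
have r_le_r' : (\int[PX]_x (r x)%:E <= \int[PX]_x (r' x)%:E)%E.
  have mlm : measurable_fun [set: T] (fun x => logit (m x)).
    exact: measurableT_comp (@measurable_logit R) mm.
  have sm x : sigmoid (logit (m x)) = m x by rewrite logitK//; case: (mid x).
  move: (gbar_min _ mlm); rewrite expected_loss_cond_risk// (expected_loss_cond_risk mlm).
  by under [X in (_ <= X)%E -> _]eq_integral do rewrite sm.
have r_fin : (\int[PX]_x (r x)%:E <= (prob_loss a k 2^-1)%:E)%E.
  have m0 : measurable_fun [set: T] (cst (0 : R)) by [].
  move: (gbar_min _ m0); rewrite expected_loss_cond_risk// (expected_loss_cond_risk m0).
  under [X in (_ <= X)%E -> _]eq_integral do rewrite /= sigmoid0 cond_risk_half.
  by rewrite integral_cst// [X in (_ * X)%E](probability_setT PX) mule1.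
have r'_le_r : (\int[PX]_x (r' x)%:E <= \int[PX]_x (r x)%:E)%E.
  apply: ge0_le_integral => //.
  - by move=> x _; rewrite lee_fin; case/andP: (rr' x).
  - exact/measurable_EFinP.
  - exact/measurable_EFinP.
  - by move=> x _; rewrite lee_fin; case/andP: (rr' x).
have r'_fin : (\int[PX]_x (r' x)%:E \is a fin_num)%E.
  rewrite ge0_fin_numE; first exact: le_lt_trans r'_le_r (le_lt_trans r_fin (ltry _)).
  by apply: integral_ge0 => x _; rewrite lee_fin; case/andP: (rr' x).
apply: filterS (ae_eq_of_integral_le mr' mr rr' r'_fin r_le_r') => x rx.
apply/eqP; apply: contraT => ne; have [_ _ /(_ ne)] := mid x.
by rewrite -/(r' x) -/(r x) rx ltxx.
Qed.

End expected_loss.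

Lemma ae_cond_prob_01 (R : realType) dO (Omega : measurableType dO)
    (P : probability Omega R) dT (T : measurableType dT) (X : {mfun Omega >-> T})
    (E : set Omega) (p : T -> R) :
  measurable E -> measurable_fun [set: T] p ->
  (forall A, measurable A ->
     P (X @^-1` A `&` E) = (\int[distribution P X]_(x in A) (p x)%:E)%E) ->
  {ae distribution P X, forall x, 0 <= p x <= 1}.
Proof.
move=> mE mp Pp.
have mXA A : measurable A -> measurable (X @^-1` A).
  by move=> mA; rewrite -[X @^-1` A]setTI; exact: measurable_funPT.
have p_ge0 : {ae distribution P X, forall x, 0 <= p x}.
  by apply: ae_ge0_of_integral_ge0 => // A mA; rewrite -Pp.
have p_le1 : {ae distribution P X, forall x, p x <= 1}.
  apply: ae_le1_of_integral_le_measure => // A mA.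
    by rewrite (le_lt_trans (probability_le1 _ mA)) ?ltry.
  by rewrite -Pp// measureIl//; exact: mXA.
by apply: filterS2 p_ge0 p_le1 => x -> ->.
Qed.

Theorem corollary1 (R : realType) (dO : measure_display) (Omega : measurableType dO)
  (P : probability Omega R) (d : nat)
  (X : {mfun Omega >-> d.-tuple R}) (Y : Omega -> R)
  (mY : measurable_fun [set: Omega] Y)
  (Ypm : forall w, Y w = 1 \/ Y w = -1)
  (p1 : d.-tuple R -> R) (mp1 : measurable_fun [set: d.-tuple R] p1)
  (p1_cond : forall A : set (d.-tuple R), measurable A ->
     P (X @^-1` A `&` Y @^-1` [set 1]) =
     (\int[distribution P X]_(x in A) (p1 x)%:E)%E)
  (alpha : R) (halpha : 0 <= alpha < 1) (k : loss_kind)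
  (gbar : d.-tuple R -> R) (mgbar : measurable_fun [set: d.-tuple R] gbar)
  (gbar_min : forall g : d.-tuple R -> R, measurable_fun [set: d.-tuple R] g ->
     (\int[P]_w (loss alpha k (Y w * gbar (X w)))%:E <=
      \int[P]_w (loss alpha k (Y w * g (X w)))%:E)%E) :
  {ae distribution P X, forall x, recovered alpha k (gbar x) = p1 x}.
Proof.
have mE : measurable (Y @^-1` [set 1]) by rewrite -[_ @^-1` _]setTI; exact: mY.
pose q x := Num.min (Num.max (p1 x) 0) 1.
have mq : measurable_fun [set: d.-tuple R] q.
  by apply: measurable_minr => //; exact: measurable_maxr.
have q01 x : 0 <= q x <= 1.
  by rewrite /q ge_min lexx orbT andbT le_min ler01 le_max lexx orbT.
(* The hypotheses only determine p1 almost everywhere; q is a version of it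
   with values in [0, 1] everywhere. *)
have q_p1 : {ae distribution P X, forall x, q x = p1 x}.
  apply: filterS (ae_cond_prob_01 mE mp1 p1_cond) => x /andP[p0 p1le].
  by rewrite /q max_l// min_l.
have Pq A : measurable A ->
    P (X @^-1` A `&` Y @^-1` [set 1]) = (\int[distribution P X]_(x in A) (q x)%:E)%E.
  move=> mA; rewrite p1_cond//; apply: ae_eq_integral => //.
  - exact/measurable_EFinP/measurable_funTS.
  - exact/measurable_EFinP/measurable_funTS.
  - by apply: filterS q_p1 => x -> _.
have := risk_minimizer_optimal_prob mY Ypm mq q01 Pq halpha mgbar gbar_min.
apply: filterS2 q_p1 => x <- sg.
exact: recovered_optimal_prob.
Qed.
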